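(* Let $q$ be an odd prime power, $n=\frac{q+1}{2}$ and $\delta$ an integer with $2\leq\delta\leq\lfloor\frac{q+3}{4}\rfloor$. Then the negacyclic BCH code $\mathcal{C}_{(q,n,\delta,0)}$ has parameters $[n,n-2(\delta-1),2\delta-1]$. All of these codes are MDS.
   Context: Let $\ell$ be the order of $q$ modulo $2n$, $\alpha$ a primitive element of $\mathrm{GF}(q^\ell)$, $\beta=\alpha^{(q^\ell-1)/(2n)}$ (a primitive $2n$-th root of unity), and $\mathbb{M}_{\beta^j}(x)$ the minimal polynomial of $\beta^j$ over $\mathrm{GF}(q)$. For $2\leq\delta\leq n$, $\mathcal{C}_{(q,n,\delta,0)}$ is the negacyclic code of length $n$ over $\mathrm{GF}(q)$ (ideal of $\mathrm{GF}(q)[x]/(x^n+1)$) generated by $\mathrm{lcm}\big(\mathbb{M}_{\beta^{1}}(x),\mathbb{M}_{\beta^{3}}(x),\ldots,\mathbb{M}_{\beta^{1+2(\delta-2)}}(x)\big)$. An $[n,k,d]$ code is MDS if $d=n-k+1$. *)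

From HB Require Import structures.
From mathcomp Require Import all_boot all_order all_algebra all_field.
Set Implicit Arguments. Unset Strict Implicit. Unset Printing Implicit Defensive.
Import Order.TTheory GRing.Theory Num.Theory.
Local Open Scope ring_scope.

Definition polylcm (F : fieldType) (p r : {poly F}) : {poly F} :=
  let l := (p * r) %/ gcdp p r in (lead_coef l)^-1 *: l.

Definition is_minpoly (F : fieldType) (L : fieldExtType F) (x : L) (p : {poly F}) :=
  [/\ p \is monic, root (map_poly (in_alg L) p) x &
      forall r : {poly F}, r != 0 -> root (map_poly (in_alg L) r) x -> (size p <= size r)%N].

(* Elements of GF(q)[x]/(x^n+1) are represented by their coefficient vectors
   (polynomials of degree < n).  The negacyclic code generated by g is the
   ideal generated by g, i.e. the set of residues (a * g) mod (x^n + 1). *)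
Definition negacyclic_code (F : finFieldType) (n : nat) (g : {poly F}) : {set 'rV[F]_n} :=
  [set c | [exists a : 'rV[F]_n, rVpoly c == (rVpoly a * g) %% ('X^n + 1)]].

Definition code_dim (F : finFieldType) (n : nat) (C : {set 'rV[F]_n}) : nat :=
  \dim <<enum C>>%VS.

Definition hamming_dist (F : finFieldType) (n : nat) (c c' : 'rV[F]_n) : nat :=
  #|[set i : 'I_n | c 0 i != c' 0 i]|.

Definition is_min_distance (F : finFieldType) (n : nat) (C : {set 'rV[F]_n}) (d : nat) :=
  (exists c, exists c', [/\ c \in C, c' \in C, c != c' & hamming_dist c c' = d]) /\
  (forall c c', c \in C -> c' \in C -> c != c' -> (d <= hamming_dist c c')%N).

Definition is_MDS (F : finFieldType) (n : nat) (C : {set 'rV[F]_n}) :=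
  exists d, is_min_distance C d /\ d = (n - code_dim C + 1)%N.

(* generator lcm(M_{beta^1}, M_{beta^3}, ..., M_{beta^(1+2(delta-2))}) *)
Definition bch_gen (F : fieldType) (m : nat -> {poly F}) (delta : nat) : {poly F} :=
  \big[@polylcm F/1]_(i < delta.-1) m (1 + 2 * i)%N.

From HB Require Import structures.
From mathcomp Require Import all_boot all_order all_algebra all_field.
From mathcomp Require Import zify ring.
Set Implicit Arguments. Unset Strict Implicit. Unset Printing Implicit Defensive.
Import Order.TTheory GRing.Theory Num.Theory.
Local Open Scope ring_scope.

(* Since #|F| = -1 modulo 2n, the Frobenius map sends beta^a to beta^-a, so for odd a < n
   the minimal polynomial of beta^a is (X - beta^a)(X - beta^-a).  For a = 1, 3, ..., 2δ-3
   these quadratics are pairwise coprime, hence the generator is their product: it has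
   degree 2(δ-1), divides X^n + 1 because beta^n = -1, and its roots beta^-(2δ-3), ...,
   beta^(2δ-3) are 2δ-2 consecutive powers of the primitive n-th root of unity beta^2.
   The BCH bound then bounds the weight of nonzero codewords below by 2δ-1, a weight
   attained by the generator itself; as the dimension is n - 2(δ-1), the code is MDS. *)

Lemma polylcm_coprime (F : fieldType) (p r : {poly F}) :
  p \is monic -> r \is monic -> coprimep p r -> polylcm p r = p * r.
Proof.
move=> p_monic r_monic; rewrite /polylcm coprimep_def => /size_poly1P [c c_neq0 ->].
have /monicP pr_lead : p * r \is monic by rewrite monicMl.
rewrite -[c%:P]mulr1 mul_polyC divpZr // divp1 lead_coefZ pr_lead.
by rewrite mulr1 scalerA mulVf ?invr_eq0 // scale1r.
Qed.

Lemma coprimep_prodr (F : fieldType) (I : Type) (r : seq I) (P : pred I)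
    (f : I -> {poly F}) (p : {poly F}) :
  (forall i, P i -> coprimep p (f i)) -> coprimep p (\prod_(i <- r | P i) f i).
Proof.
move=> cop; apply: (big_ind (coprimep p)) => // [|u v]; first exact: coprimep1.
by rewrite coprimepMr => -> ->.
Qed.

Section PairwiseCoprime.
Variables (F : fieldType) (I : eqType) (f : I -> {poly F}).

Lemma big_polylcm_coprime (r : seq I) :
  uniq r -> (forall i, f i \is monic) ->
  {in r &, forall i j, i != j -> coprimep (f i) (f j)} ->
  \big[@polylcm F/1]_(i <- r) f i = \prod_(i <- r) f i.
Proof.
elim: r => [|x r IH]; first by rewrite !big_nil.
rewrite /= => /andP [x_notin_r r_uniq] f_monic cop.
rewrite !big_cons IH //; last by move=> i j ir jr; apply: cop; rewrite inE ?ir ?jr orbT.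
apply: polylcm_coprime => //; first exact: monic_prod.
rewrite big_seq_cond; apply: coprimep_prodr => y /andP [yr _].
by apply: cop; rewrite ?inE ?eqxx ?yr ?orbT //; apply: contraNneq x_notin_r => ->.
Qed.

Lemma dvdp_prod_coprime (r : seq I) (h : {poly F}) :
  uniq r -> {in r &, forall i j, i != j -> coprimep (f i) (f j)} ->
  {in r, forall i, f i %| h} -> \prod_(i <- r) f i %| h.
Proof.
elim: r => [|x r IH]; first by rewrite big_nil dvd1p.
rewrite /= => /andP [x_notin_r r_uniq] cop dvd_h.
rewrite big_cons Gauss_dvdp ?dvd_h ?mem_head ?IH //=.
- by move=> i j ir jr; apply: cop; rewrite inE ?ir ?jr orbT.
- by move=> i ir; apply: dvd_h; rewrite inE ir orbT.
rewrite big_seq_cond; apply: coprimep_prodr => y /andP [yr _].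
by apply: cop; rewrite ?inE ?eqxx ?yr ?orbT //; apply: contraNneq x_notin_r => ->.
Qed.

End PairwiseCoprime.

Lemma eq_prim_expr (R : idomainType) (z : R) (N a b : nat) :
  N.-primitive_root z -> (a < N)%N -> (b < N)%N -> (z ^+ a == z ^+ b) = (a == b).
Proof. by move=> z_prim aN bN; rewrite (eq_prim_root_expr z_prim) !modn_small. Qed.

Lemma prim_expr_half (R : idomainType) (z : R) (n : nat) :
  (2 * n).-primitive_root z -> z ^+ n = -1.
Proof.
move=> z_prim; have := prim_order_gt0 z_prim; rewrite muln_gt0 => /andP [_ n_gt0].
have : (z ^+ n) ^+ 2 == 1 by rewrite -exprM mulnC prim_expr_order.
rewrite sqrf_eq1 => /orP [|/eqP //]; rewrite -(prim_order_dvd z_prim).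
by move/(dvdn_leq n_gt0); lia.
Qed.

Lemma sum_coef_horner_geometric (R : comNzRingType) (z a : R) (n D : nat) (c P : {poly R}) :
  (size c <= n)%N -> (size P <= D)%N ->
  \sum_(t < D) P`_t * c.[a * z ^+ t] = \sum_(i < n) c`_i * a ^+ i * P.[z ^+ i].
Proof.
move=> size_c size_P.
under eq_bigr => t _ do rewrite (horner_coef_wide _ size_c) mulr_sumr.
rewrite exchange_big /=; apply: eq_bigr => i _.
rewrite (horner_coef_wide _ size_P) !mulr_sumr; apply: eq_bigr => t _.
by rewrite exprMn -!exprM mulnC; ring.
Qed.

Lemma bch_bound (K : fieldType) (z a : K) (n D : nat) (c : {poly K}) :
  n.-primitive_root z -> a != 0 -> (size c <= n)%N -> c != 0 ->
  (forall t, (t < D)%N -> root c (a * z ^+ t)) ->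
  (D < #|[set i : 'I_n | (c`_i != 0)%R]|)%N.
Proof.
move=> z_prim a_neq0 size_c c_neq0 c_roots; set S := [set i : 'I_n | (c`_i != 0)%R].
rewrite ltnNge; apply/negP => card_S.
have lead_lt_n : ((size c).-1 < n)%N by rewrite prednK ?size_poly_gt0.
pose i0 : 'I_n := Ordinal lead_lt_n.
have ci0_neq0 : c`_i0 != 0 by rewrite -lead_coefE lead_coef_eq0.
have i0S : i0 \in S by rewrite inE.
(* P vanishes at z^i for every other support position i, so only the term i0 survives. *)
pose P := \prod_(i <- enum (S :\ i0)) ('X - (z ^+ i)%:P).
have size_P : (size P <= D)%N.
  by rewrite size_prod_XsubC -cardE (cardsD1 i0 S) i0S in card_S *.
have := sum_coef_horner_geometric z a size_c size_P.
rewrite big1 => [|t _]; last by rewrite (eqP (c_roots t (ltn_ord t))) mulr0.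
rewrite (bigD1 i0) //= big1 ?addr0 => [|i i_neq_i0]; last first.
  have [iS|] := boolP (i \in S); last by rewrite inE negbK => /eqP ->; rewrite !mul0r.
  suff /eqP -> : root P (z ^+ i) by rewrite mulr0.
  rewrite /P -(big_map (fun i : 'I_n => z ^+ i) xpredT (fun x => 'X - x%:P)).
  by rewrite root_prod_XsubC; apply: map_f; rewrite mem_enum in_setD1 i_neq_i0.
move/esym/eqP; rewrite !mulf_eq0 expf_eq0 (negbTE a_neq0) (negbTE ci0_neq0) andbF /=.
apply/negP; rewrite /P horner_prod prodf_seq_neq0; apply/allP => j.
rewrite mem_enum !inE => /andP [j_neq_i0 _].
rewrite !hornerE subr_eq0 (eq_prim_expr z_prim) ?ltn_ord //.
by apply: contra j_neq_i0 => /eqP i0j; apply/eqP/val_inj; rewrite /= -i0j.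
Qed.

Section FiniteFieldExtension.
Variables (F : finFieldType) (L : fieldExtType F).

Lemma pchar_nat_card : [pchar L].-nat #|F|.
Proof.
have [p p_prime pchar_p] := finPcharP F.
rewrite (card_pprimeChar pchar_p) pnatX (@eq_pnat _ p) ?pnat_id // => x.
by rewrite pchar_lalg; apply: pcharf_eq.
Qed.

Lemma exprD_card (x y : L) : (x + y) ^+ #|F| = x ^+ #|F| + y ^+ #|F|.
Proof. exact: exprDn_pchar pchar_nat_card. Qed.

Lemma expr_card_in_alg (a : F) : (a%:A : L) ^+ #|F| = a%:A.
Proof. by rewrite -in_algE -rmorphXn expf_card. Qed.

Lemma expr_card_fixed (x : L) : x ^+ #|F| = x -> exists a : F, x = a%:A.
Proof.
move=> x_fixed; have := Fermat's_little_theorem 1%AS x.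
rewrite dimv1 expn1 x_fixed eqxx => /vlineP [a ->]; by exists a.
Qed.

Lemma minpoly_dvdp (x : L) (p r : {poly F}) :
  is_minpoly x p -> root (map_poly (in_alg L) r) x -> p %| r.
Proof.
case=> p_monic p_x p_min r_x; rewrite /dvdp; apply: contraT => rem_neq0.
have : root (map_poly (in_alg L) (r %% p)) x.
  move: r_x; rewrite map_modp /root.
  rewrite {1}(divp_eq (map_poly (in_alg L) r) (map_poly (in_alg L) p)).
  by rewrite hornerD hornerM (eqP p_x) mulr0 add0r.
by move/(p_min _ rem_neq0); rewrite leqNgt ltn_modp monic_neq0.
Qed.

Lemma map_minpoly_conj (x : L) (p : {poly F}) : is_minpoly x p ->
  x ^+ #|F| ^+ #|F| = x -> x ^+ #|F| != x ->
  map_poly (in_alg L) p = ('X - x%:P) * ('X - (x ^+ #|F|)%:P).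
Proof.
move=> p_minpoly x_qq x_q_neq; have [p_monic p_x _] := p_minpoly.
set y := x ^+ #|F| in x_qq x_q_neq *.
have [s sE] : exists s : F, x + y = s%:A by apply: expr_card_fixed; rewrite exprD_card x_qq addrC.
have [t tE] : exists t : F, x * y = t%:A by apply: expr_card_fixed; rewrite exprMn x_qq mulrC.
pose P : {poly F} := 'X^2 - s%:P * 'X + t%:P.
have PE : map_poly (in_alg L) P = ('X - x%:P) * ('X - y%:P).
  rewrite !(rmorphD, rmorphN, rmorphM) /= map_polyX !map_polyC /= -sE -tE.
  by rewrite polyCD polyCM; ring.
have P_monic : P \is monic by rewrite -(map_monic (in_alg L)) PE monicMl ?monicXsubC.
have size_P : size P = 3%N.
  by rewrite -(size_map_poly (in_alg L)) PE size_mul ?polyXsubC_eq0 // !size_XsubC.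
have p_dvd_P : p %| P by apply: (minpoly_dvdp p_minpoly); rewrite PE rootM root_XsubC eqxx.
have size_p_gt1 : (1 < size p)%N.
  by rewrite -(size_map_poly (in_alg L)); apply: root_size_gt1 p_x; rewrite map_poly_eq0 monic_neq0.
have size_p_neq2 : size p != 2%N.
  apply/eqP => size_p2; have [r p_r] := poly2_root size_p2.
  suff x_in_F : x = r%:A by move: x_q_neq; rewrite /y x_in_F expr_card_in_alg eqxx.
  apply/eqP; apply: contraFT (ltnn 2) => x_neq; rewrite -[in X in (_ < X)%N]size_p2.
  rewrite -(size_map_poly (in_alg L)); apply: (@max_poly_roots _ _ [:: x; r%:A]).
  - by rewrite map_poly_eq0 monic_neq0.
  - by rewrite /= p_x -in_algE fmorph_root p_r.
  - by rewrite /= inE x_neq.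
have size_p : size p = 3%N.
  by apply/eqP; rewrite eqn_leq -size_P dvdp_leq -?size_poly_eq0 ?size_P //; lia.
have /eqP -> : p == P by rewrite -eqp_monic // -dvdp_size_eqp // size_p size_P.
exact: PE.
Qed.

End FiniteFieldExtension.

Section PolynomialCodes.
Variables (F : finFieldType) (n : nat).

Definition weight (c : 'rV[F]_n) : nat := #|[set i : 'I_n | c 0 i != 0]|.

Lemma hamming_distE (c c' : 'rV[F]_n) : hamming_dist c c' = weight (c - c').
Proof. by apply: eq_card => i; rewrite !inE !mxE subr_eq0. Qed.

Lemma weight_poly_rV (p : {poly F}) : (weight (poly_rV p) <= size p)%N.
Proof.
rewrite /weight cardE -(size_map val) -[size p](size_iota 0).
apply: uniq_leq_size; first by rewrite map_inj_uniq ?enum_uniq //; exact: val_inj.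
move=> j /mapP [i]; rewrite mem_enum inE mxE => p_i ->; rewrite mem_iota /=.
by apply: contraR p_i; rewrite -leqNgt => /(nth_default 0) ->.
Qed.

Lemma is_min_distance_weight (C : {set 'rV[F]_n}) (c0 : 'rV[F]_n) (d : nat) :
  {in C &, forall c c', c - c' \in C} -> c0 \in C -> c0 != 0 -> weight c0 = d ->
  {in C, forall c, c != 0 -> (d <= weight c)%N} -> is_min_distance C d.
Proof.
move=> subC c0C c0_neq0 w_c0 w_min; have zC : 0 \in C by rewrite -(subrr c0) subC.
split; first by exists c0, 0; rewrite hamming_distE subr0.
by move=> c c' cC c'C; rewrite hamming_distE -subr_eq0 => ?; apply: w_min; rewrite ?subC.
Qed.

Lemma negacyclic_codeE (g : {poly F}) : (0 < n)%N -> g %| 'X^n + 1 ->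
  forall c, (c \in negacyclic_code n g) = (g %| rVpoly c).
Proof.
move=> n_gt0 g_dvd c; have size_Xn1 : size ('X^n + 1 : {poly F}) = n.+1.
  by rewrite size_polyDl ?size_polyXn ?size_poly1.
have g_neq0 : g != 0.
  by apply: contraTneq g_dvd => ->; rewrite dvd0p -size_poly_eq0 size_Xn1.
rewrite inE; apply/existsP/idP => [[a /eqP ->]|g_dvd_c]; first by rewrite -dvdp_mod // dvdp_mull.
have size_c : (size (rVpoly c) <= n)%N by apply: size_poly.
exists (poly_rV (rVpoly c %/ g)); apply/eqP.
rewrite poly_rV_K; last by rewrite size_divp //; apply: leq_trans (leq_subr _ _) size_c.
by rewrite divpK // modp_small // size_Xn1.
Qed.

Lemma dim_poly_code (g : {poly F}) (C : {set 'rV[F]_n}) :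
  (forall c, (c \in C) = (g %| rVpoly c)) -> (size g <= n)%N -> g != 0 ->
  \dim <<enum C>> = (n - (size g).-1)%N.
Proof.
move=> memC size_g g_neq0; set k := (n - (size g).-1)%N.
have size_mul (x : 'rV[F]_k) : (size (rVpoly x * g)%R <= n)%N.
  apply: leq_trans (size_polyMleq _ _) _.
  have : (size (rVpoly x) <= k)%N by apply: size_poly.
  have : (0 < size g)%N by rewrite size_poly_gt0.
  lia.
pose f (x : 'rV[F]_k) : 'rV[F]_n := poly_rV (rVpoly x * g).
have f_linear : linear f by move=> a x y; rewrite /f linearP /= mulrDl -scalerAl linearP.
pose h := linfun (HB.pack f (GRing.isLinear.Build _ _ _ _ f f_linear) : {linear _ -> _}).
have hE x : h x = poly_rV (rVpoly x * g) by rewrite lfunE.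
have h_inj : lker h == 0%VS.
  apply/lker0P => x y; rewrite !hE => /(congr1 rVpoly); rewrite !poly_rV_K //.
  by move/(mulIf g_neq0)/(congr1 (@poly_rV _ k)); rewrite !rVpolyK.
have -> : <<enum C>>%VS = (h @: fullv)%VS.
  apply/eqP; rewrite eqEsubv; apply/andP; split.
    apply/span_subvP => c; rewrite mem_enum memC => g_dvd_c.
    apply/memv_imgP; exists (poly_rV (rVpoly c %/ g)); first exact: memvf.
    have size_c : (size (rVpoly c) <= n)%N by apply: size_poly.
    rewrite hE poly_rV_K ?divpK ?rVpolyK // size_divp //; exact: leq_sub2r.
  apply/subvP => _ /memv_imgP [x _ ->]; apply: memv_span.
  by rewrite mem_enum memC hE poly_rV_K ?dvdp_mull.
by rewrite limg_dim_eq ?dimvf /dim /= ?mul1n // (eqP h_inj) capv0.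
Qed.

End PolynomialCodes.

Section NegacyclicBCH.
Variables (F : finFieldType) (L : fieldExtType F) (n : nat) (beta : L) (m : nat -> {poly F}).
Hypotheses (card_F : (2 * n = #|F|.+1)%N) (beta_prim : (2 * n).-primitive_root beta)
  (m_minpoly : forall j, is_minpoly (beta ^+ j) (m j)).

Let n_gt0 : (0 < n)%N. Proof. by have := card_F; lia. Qed.

Lemma expr_beta_card a : (0 < a <= 2 * n)%N -> (beta ^+ a) ^+ #|F| = beta ^+ (2 * n - a).
Proof.
move=> a_bounds; rewrite -exprM (_ : (a * #|F| = 2 * n * a.-1 + (2 * n - a))%N); last first.
  by have := card_F; case: a a_bounds => [|a] /=; nia.
by rewrite exprD exprM (prim_expr_order beta_prim) expr1n mul1r.
Qed.

Lemma map_minpoly_beta a : (0 < a < n)%N ->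
  map_poly (in_alg L) (m a) = ('X - (beta ^+ a)%:P) * ('X - (beta ^+ (2 * n - a))%:P).
Proof.
move=> a_bounds; rewrite (map_minpoly_conj (m_minpoly a)) expr_beta_card //; try lia.
  by rewrite expr_beta_card ?subKn //; lia.
by rewrite (eq_prim_expr beta_prim); lia.
Qed.

Lemma coprimep_minpoly_beta a b : (0 < a < n)%N -> (0 < b < n)%N -> a != b ->
  coprimep (m a) (m b).
Proof.
move=> a_bounds b_bounds a_neq_b; rewrite -(coprimep_map (in_alg L)).
rewrite !map_minpoly_beta // coprimepMl !coprimepMr !coprimep_XsubC !root_XsubC.
by rewrite !(eq_prim_expr beta_prim); lia.
Qed.

Variable k : nat.
Hypothesis k_lt : (2 * k < n)%N.
Local Notation g := (bch_gen m k.+1).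

Lemma coprimep_bch_factors (i j : 'I_k) : i != j ->
  coprimep (m (1 + 2 * i)%N) (m (1 + 2 * j)%N).
Proof.
rewrite -val_eqE /= => i_neq_j; have := ltn_ord i; have := ltn_ord j => j_lt i_lt.
by apply: coprimep_minpoly_beta; lia.
Qed.

Lemma bch_genE : g = \prod_(i < k) m (1 + 2 * i)%N.
Proof.
rewrite /bch_gen /= big_polylcm_coprime ?index_enum_uniq // => [j|i j _ _].
  by have [] := m_minpoly (1 + 2 * j)%N.
exact: coprimep_bch_factors.
Qed.

Lemma size_bch_gen : size g = (2 * k).+1.
Proof.
rewrite bch_genE size_prod => [|i _]; last by have [/monic_neq0] := m_minpoly (1 + 2 * i)%N.
rewrite (eq_bigr (fun _ => 3%N)) => [|i _]; last first.
  rewrite -(size_map_poly (in_alg L)) map_minpoly_beta; last by have := ltn_ord i; lia.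
  by rewrite size_mul ?polyXsubC_eq0 // !size_XsubC.
by rewrite sum_nat_const cardT size_enum_ord; lia.
Qed.

Lemma bch_gen_dvdp : g %| 'X^n + 1.
Proof.
rewrite bch_genE; apply: dvdp_prod_coprime => [|i j _ _|i _].
- exact: index_enum_uniq.
- exact: coprimep_bch_factors.
apply: (minpoly_dvdp (m_minpoly _)); have a_odd : odd (1 + 2 * i) by rewrite oddD oddM.
move: (1 + 2 * i)%N a_odd => a a_odd.
rewrite rmorphD rmorph1 /= map_polyXn /root !hornerE -exprM (mulnC a) exprM.
by rewrite (prim_expr_half beta_prim) -signr_odd a_odd addNr.
Qed.

Let bch_gen_neq0 : g != 0. Proof. by rewrite -size_poly_eq0 size_bch_gen. Qed.
Let size_bch_gen_le : (size g <= n)%N. Proof. by rewrite size_bch_gen. Qed.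
Let bch_codeE := negacyclic_codeE n_gt0 bch_gen_dvdp.

Lemma root_map_bch_gen i : (i < k)%N ->
  root (map_poly (in_alg L) g) (beta ^+ (1 + 2 * i)) &&
  root (map_poly (in_alg L) g) (beta ^+ (2 * n - (1 + 2 * i))).
Proof.
move=> i_lt; have : m (1 + 2 * i)%N %| g by rewrite bch_genE (bigD1 (Ordinal i_lt)) //= dvdp_mulIl.
rewrite -(dvdp_map (in_alg L)) => m_dvd_g.
by rewrite !(root_dvdp m_dvd_g) // map_minpoly_beta ?rootM ?root_XsubC ?eqxx ?orbT //; lia.
Qed.

(* The root is beta^(2t - (2k-1)): for t < k it is beta^-(1 + 2(k-1-t)), otherwise
   beta^(1 + 2(t-k)). *)
Lemma root_map_bch_gen_consecutive t : (t < 2 * k)%N ->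
  root (map_poly (in_alg L) g) (beta ^+ (2 * n - (2 * k - 1)) * (beta ^+ 2) ^+ t).
Proof.
move=> t_lt; rewrite -exprM -exprD.
have [t_lt_k | t_ge_k] := ltnP t k.
  rewrite (_ : (_ + _ = 2 * n - (1 + 2 * (k - 1 - t)))%N); last by lia.
  have i_lt : (k - 1 - t < k)%N by lia.
  by case/andP: (root_map_bch_gen i_lt).
rewrite (_ : (_ + _ = 2 * n + (1 + 2 * (t - k)))%N); last by lia.
rewrite exprD (prim_expr_order beta_prim) mul1r.
have i_lt : (t - k < k)%N by lia.
by case/andP: (root_map_bch_gen i_lt).
Qed.

Lemma weight_bch_code c : c \in negacyclic_code n g -> c != 0 -> (2 * k < weight c)%N.
Proof.
rewrite bch_codeE => g_dvd_c c_neq0.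
have -> : weight c = #|[set i : 'I_n | ((map_poly (in_alg L) (rVpoly c))`_i != 0)%R]|.
  by apply: eq_card => i; rewrite !inE coef_map /= coef_rVpoly_ord scaler_eq0 oner_eq0 orbF.
apply: (bch_bound (z := beta ^+ 2) (a := beta ^+ (2 * n - (2 * k - 1)))) => [||||t t_lt].
- by have := dvdn_prim_root beta_prim (dvdn_mull 2 (dvdnn n)); rewrite mulnK ?n_gt0.
- by rewrite expf_neq0 // (prim_root_eq0 beta_prim) muln_eq0 -lt0n n_gt0.
- by rewrite size_map_poly; apply: size_poly.
- rewrite map_poly_eq0; apply: contraNneq c_neq0 => c_eq0.
  by rewrite -(rVpolyK c) c_eq0 linear0.
apply: root_dvdp (root_map_bch_gen_consecutive t_lt); by rewrite dvdp_map.
Qed.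

Lemma dim_bch_code : code_dim (negacyclic_code n g) = (n - 2 * k)%N.
Proof.
rewrite /code_dim (dim_poly_code bch_codeE size_bch_gen_le bch_gen_neq0).
exact: (congr1 (fun s => n - s.-1)%N size_bch_gen).
Qed.

Lemma min_distance_bch_code : is_min_distance (negacyclic_code n g) (2 * k).+1.
Proof.
have gC : poly_rV g \in negacyclic_code n g by rewrite bch_codeE poly_rV_K.
have g_neq0 : poly_rV g != 0 :> 'rV[F]_n.
  apply: contraNneq bch_gen_neq0 => g_eq0.
  by rewrite -(poly_rV_K size_bch_gen_le) g_eq0 linear0.
apply: (is_min_distance_weight (c0 := poly_rV g)) => //.
- by move=> c c'; rewrite !bch_codeE linearB; apply: dvdp_sub.
- by apply/eqP; rewrite eqn_leq -{1}size_bch_gen weight_poly_rV weight_bch_code.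
by move=> c cC c_neq0; apply: weight_bch_code.
Qed.

End NegacyclicBCH.

Theorem proposition9 (F : finFieldType) (L : fieldExtType F) (beta : L)
    (m : nat -> {poly F}) (delta : nat) :
  odd #|F| ->
  let q := #|F| in
  let n := q.+1./2 in
  (2 * n).-primitive_root beta ->
  (forall j : nat, is_minpoly (beta ^+ j) (m j)) ->
  (2 <= delta)%N -> (delta <= (q + 3) %/ 4)%N ->
  let C := negacyclic_code n (bch_gen m delta) in
  [/\ code_dim C = (n - 2 * (delta - 1))%N,
      is_min_distance C (2 * delta - 1)%N
    & is_MDS C].
Proof.
move=> q_odd q n beta_prim m_minpoly delta_gt1 delta_le C.
have card_F : (2 * n = q.+1)%N.
  by rewrite /n -[in RHS](odd_double_half q.+1) /= q_odd -mul2n.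
have [k delta_eq] : exists k, delta = k.+1 by exists delta.-1; lia.
have k_lt : (2 * k < n)%N.
  by move: delta_le; rewrite delta_eq leq_divRL //; have := card_F; lia.
rewrite {}/C {delta_gt1 delta_le}delta_eq (_ : (2 * k.+1 - 1 = (2 * k).+1)%N); last by lia.
have dimC := dim_bch_code card_F beta_prim m_minpoly k_lt.
have distC := min_distance_bch_code card_F beta_prim m_minpoly k_lt.
split=> //; first by rewrite dimC; congr (_ - _)%N; lia.
by exists (2 * k).+1; split=> //; rewrite dimC; lia.
Qed.
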